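(* Let $F\in[0,1]$ and $0\le p\le F$, and let $F'_{\min}(p,F)=\min\{F'_{00}(\rho_1\otimes\rho_2):\rho_1,\rho_2\in S_{p,F}\}$. Then $$F'_{\min}(p,F)\ge\frac{p(2F-p)}{1+(1-p)^2}.$$
   Context: For qubit registers $(R,T)$, $|\Psi_{ij}\rangle_{RT}=(I_R\otimes(X^iZ^j)_T)\tfrac1{\sqrt2}(|00\rangle+|11\rangle)$. $S_{p,F}$ is the set of two-qubit density operators $\rho$ with $\rho=p|\Psi_{00}\rangle\langle\Psi_{00}|+(1-p)\sigma$ for some density operator $\sigma$ and $\langle\Psi_{00}|\rho|\Psi_{00}\rangle=F$. For $\rho_1$ on $(A_1,B_1)$ and $\rho_2$ on $(A_2,B_2)$: $p'_{ij}(\rho_1\otimes\rho_2)=\mathrm{Tr}[|\Psi_{ij}\rangle\langle\Psi_{ij}|_{A_1A_2}\rho_1\otimes\rho_2]$ is the probability of Bell-state measurement outcome $ij$ on $(A_1,A_2)$, and $F'_{ij}(\rho_1\otimes\rho_2)=\frac1{p'_{ij}}\mathrm{Tr}[|\Psi_{ij}\rangle\langle\Psi_{ij}|_{B_1B_2}|\Psi_{ij}\rangle\langle\Psi_{ij}|_{A_1A_2}\rho_1\otimes\rho_2]$ is the postselected end-to-end fidelity. *)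

(* complex numbers are algC (an algebraically closed num field,
   whose partial order `0 <= z` means z is a nonnegative real). *)
From mathcomp Require Import all_boot all_order all_algebra all_field.
Set Implicit Arguments. Unset Strict Implicit. Unset Printing Implicit Defensive.
Import Order.TTheory GRing.Theory Num.Theory.
Local Open Scope ring_scope.

Notation C := algC.
Notation qubit := 'I_2.

(* Two-qubit computational basis |r t> (register R = first/most significant
   factor) is indexed by 'I_4 via r t |-> 2 r + t. *)
Definition ix (r t : qubit) : 'I_4 := inord (2 * r + t).
Definition hi (k : 'I_4) : qubit := inord (k %/ 2).
Definition lo (k : 'I_4) : qubit := inord (k %% 2).

Definition kron2 (A B : 'M[C]_2) : 'M[C]_4 :=
  \matrix_(i, j) (A (hi i) (hi j) * B (lo i) (lo j)).

Definition PauliX : 'M[C]_2 := \matrix_(i, j) (if i != j then 1 else 0).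
Definition PauliZ : 'M[C]_2 :=
  \matrix_(i, j) (if i == j then (if i == 0 :> qubit then 1 else -1) else 0).

Definition adjmx m n (A : 'M[C]_(m, n)) : 'M[C]_(n, m) := (map_mx Num.conj A)^T.

Definition phiplus : 'cV[C]_4 :=
  (sqrtC 2)^-1 *: \col_k (if hi k == lo k then 1 else 0).

Definition bell (i j : qubit) : 'cV[C]_4 :=
  kron2 1%:M (PauliX ^+ i *m PauliZ ^+ j) *m phiplus.

Definition proj (v : 'cV[C]_4) : 'M[C]_4 := v *m adjmx v.

Definition is_density (rho : 'M[C]_4) : Prop :=
  (forall v : 'cV[C]_4, 0 <= (adjmx v *m rho *m v) 0 0) /\ \tr rho = 1.

Definition fid00 (rho : 'M[C]_4) : C :=
  (adjmx (bell 0 0) *m rho *m bell 0 0) 0 0.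

Definition S_pF (p F : C) (rho : 'M[C]_4) : Prop :=
  is_density rho /\
  (exists sigma, is_density sigma /\ rho = p *: proj (bell 0 0) + (1 - p) *: sigma) /\
  fid00 rho = F.

(* Four-qubit system (A1,B1,A2,B2); basis index (((a1,b1),a2),b2). *)
Definition q4 := (qubit * qubit * qubit * qubit)%type.
Definition gA1 (x : q4) : qubit := x.1.1.1.
Definition gB1 (x : q4) : qubit := x.1.1.2.
Definition gA2 (x : q4) : qubit := x.1.2.
Definition gB2 (x : q4) : qubit := x.2.

Definition tens4 (rho1 rho2 : 'M[C]_4) (x y : q4) : C :=
  rho1 (ix (gA1 x) (gB1 x)) (ix (gA1 y) (gB1 y)) *
  rho2 (ix (gA2 x) (gB2 x)) (ix (gA2 y) (gB2 y)).

Definition projA (i j : qubit) (x y : q4) : C :=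
  proj (bell i j) (ix (gA1 x) (gA2 x)) (ix (gA1 y) (gA2 y)) *
  ((gB1 x == gB1 y) && (gB2 x == gB2 y))%:R.

Definition projAB (i j : qubit) (x y : q4) : C :=
  proj (bell i j) (ix (gB1 x) (gB2 x)) (ix (gB1 y) (gB2 y)) *
  proj (bell i j) (ix (gA1 x) (gA2 x)) (ix (gA1 y) (gA2 y)).

Definition tr4 (P M : q4 -> q4 -> C) : C := \sum_(x : q4) \sum_(y : q4) P x y * M y x.

Definition pprime (i j : qubit) (rho1 rho2 : 'M[C]_4) : C :=
  tr4 (projA i j) (tens4 rho1 rho2).

Definition Fprime (i j : qubit) (rho1 rho2 : 'M[C]_4) : C :=
  tr4 (projAB i j) (tens4 rho1 rho2) / pprime i j rho1 rho2.

(* Write rho_i = p Phi + (1 - p) sigma_i with Phi the projector on Psi_00, and let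
   <A, B> = sum_kl A_kl B_kl.  The postselected fidelity is N / D with
   N = <rho_1, rho_2> / 4 and D = <Tr_B rho_1, Tr_B rho_2> / 2, and bilinearity gives
     4 N = p (2F - p) + (1 - p)^2 <sigma_1, sigma_2>,
     4 D = p (2 - p) + 2 (1 - p)^2 <Tr_B sigma_1, Tr_B sigma_2>.
   By Schur's product theorem <A, B> >= 0 for positive semidefinite A and B.  This
   makes the last term of N nonnegative; applied to Tr_B sigma_1 and the adjugate
   tr(Y) 1 - Y of the 2x2 matrix Y = Tr_B sigma_2, it bounds <Tr_B sigma_1, Y> by 1,
   so that 4 D <= 1 + (1 - p)^2. *)

From mathcomp Require Import all_boot all_order all_algebra all_field.
From mathcomp Require Import ring.
Import Order.TTheory GRing.Theory Num.Theory.
Set Implicit Arguments. Unset Strict Implicit. Unset Printing Implicit Defensive.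
Local Open Scope ring_scope.

Lemma sum_delta (R : pzSemiRingType) n (F : 'I_n -> R) i :
  \sum_j (i == j)%:R * F j = F i.
Proof.
rewrite (bigD1 i) //= eqxx mul1r big1 ?addr0 // => j /negPf.
by rewrite eq_sym => ->; rewrite mul0r.
Qed.

Definition qform n (A : 'M[C]_n) (v : 'cV[C]_n) : C := (adjmx v *m A *m v) 0 0.

Definition psdmx n (A : 'M[C]_n) : Prop := forall v, 0 <= qform A v.

Definition hadamard_sum n (A B : 'M[C]_n) : C := \sum_k \sum_l A k l * B k l.

Lemma qformE n (A : 'M[C]_n) v :
  qform A v = \sum_k \sum_l (v k 0)^* * A k l * v l 0.
Proof.
rewrite /qform mxE exchange_big /=; apply: eq_bigr => l _.
rewrite mxE mulr_suml; apply: eq_bigr => k _.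
by rewrite /adjmx !mxE.
Qed.

Lemma qform_delta2 n (A : 'M[C]_n) i j c :
  qform A (delta_mx i 0 + c *: delta_mx j 0) =
  A i i + c * A i j + c^* * A j i + c^* * c * A j j.
Proof.
have sum_delta2 d (F : 'I_n -> C) :
    \sum_k ((i == k)%:R + d * (j == k)%:R) * F k = F i + d * F j.
  under eq_bigr => k _ do rewrite mulrDl -mulrA.
  by rewrite big_split /= -mulr_sumr !sum_delta.
rewrite qformE.
transitivity (\sum_k ((i == k)%:R + c^* * (j == k)%:R) *
                \sum_l ((i == l)%:R + c * (j == l)%:R) * A k l).
  apply: eq_bigr => k _; rewrite mulr_sumr; apply: eq_bigr => l _.
  rewrite !mxE !andbT rmorphD rmorphM /= !rmorph_nat ![_ == i]eq_sym ![_ == j]eq_sym.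
  ring.
by rewrite sum_delta2 !sum_delta2; ring.
Qed.

Lemma psdmx_diag_conj n (A : 'M[C]_n) k : psdmx A -> (A k k)^* = A k k.
Proof.
move=> psdA; apply: geC0_conj.
have := psdA (delta_mx k 0 + 0 *: delta_mx k 0).
by rewrite qform_delta2 rmorph0 !mul0r !addr0.
Qed.

Lemma psdmx_herm n (A : 'M[C]_n) i j : psdmx A -> A j i = (A i j)^*.
Proof.
move=> psdA.
have real c : (qform A (delta_mx i 0 + c *: delta_mx j 0))^* =
              qform A (delta_mx i 0 + c *: delta_mx j 0) by apply: geC0_conj.
have := real 1; have := real 'i; rewrite !qform_delta2.
rewrite !rmorphD !rmorphM /= conjCi ?rmorphN /= ?conjCi ?opprK !rmorph1.
rewrite !(psdmx_diag_conj _ psdA) => Ei E1.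
have := f_equal2 (fun x y => 'i * x - y) E1 Ei; move/eqP; rewrite -subr_eq0.
rewrite [X in X == 0](_ : _ = 'i * 2 * ((A i j)^* - A j i)); last by ring.
by rewrite !mulf_eq0 (negPf (neq0Ci _)) pnatr_eq0 /= subr_eq0 => /eqP.
Qed.

Section Schur.
Local Open Scope sesquilinear_scope.

Lemma hadamard_sum_ge0 n (A B : 'M[C]_n) :
  psdmx A -> psdmx B -> 0 <= hadamard_sum A B.
Proof.
move=> psdA psdB.
have normalB : B \is normalmx.
  apply/hermitian_normalmx/is_hermitianmxP; rewrite expr0 scale1r.
  by apply/matrixP => k l; rewrite !mxE; apply: psdmx_herm.
set P := spectralmx B; set d := spectral_diag B.
have unitaryP : P \is unitarymx by apply: spectral_unitarymx.
have decB : B = P^t* *m diag_mx d *m P.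
  by rewrite {1}(orthomx_spectralP normalB) invmx_unitary.
have d_ge0 m : 0 <= d 0 m.
  have : P *m B *m P^t* = diag_mx d.
    rewrite decB !mulmxA (unitarymxP unitaryP) mul1mx -mulmxA.
    by rewrite (unitarymxP unitaryP) mulmx1.
  move/matrixP/(_ m m); rewrite !mxE eqxx mulr1n => <-.
  have := psdB (col m (P^t*)); rewrite qformE.
  congr (0 <= _); rewrite exchange_big /=; apply: eq_bigr => l _.
  rewrite [(P *m B) m l]mxE mulr_suml; apply: eq_bigr => k _.
  by rewrite !mxE conjCK.
have entryB k l : B k l = \sum_m (P m k)^* * d 0 m * P m l.
  by rewrite {1}decB mxE; apply: eq_bigr => m _; rewrite mul_mx_diag !mxE.
have -> : hadamard_sum A B =
          \sum_m d 0 m * \sum_k \sum_l (P m k)^* * A k l * P m l.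
  rewrite /hadamard_sum.
  under eq_bigr => k _ do (under eq_bigr => l _ do rewrite entryB mulr_sumr;
                           rewrite exchange_big /=).
  rewrite exchange_big /=; apply: eq_bigr => m _; rewrite mulr_sumr.
  apply: eq_bigr => k _; rewrite mulr_sumr; apply: eq_bigr => l _; ring.
apply: sumr_ge0 => m _; apply: mulr_ge0 => //.
have := psdA (row m P)^T; rewrite qformE.
by congr (0 <= _); apply: eq_bigr => k _; apply: eq_bigr => l _; rewrite !mxE.
Qed.

End Schur.

Lemma hadamard_sumC n (A B : 'M[C]_n) : hadamard_sum A B = hadamard_sum B A.
Proof. by apply: eq_bigr => k _; apply: eq_bigr => l _; rewrite mulrC. Qed.

Lemma hadamard_sumDl n (A B X : 'M[C]_n) :
  hadamard_sum (A + B) X = hadamard_sum A X + hadamard_sum B X.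
Proof.
rewrite -big_split; apply: eq_bigr => k _; rewrite -big_split.
by apply: eq_bigr => l _; rewrite mxE mulrDl.
Qed.

Lemma hadamard_sumZl n a (A X : 'M[C]_n) :
  hadamard_sum (a *: A) X = a * hadamard_sum A X.
Proof.
rewrite mulr_sumr; apply: eq_bigr => k _; rewrite mulr_sumr.
by apply: eq_bigr => l _; rewrite mxE mulrA.
Qed.

Lemma hadamard_sumDr n (A B X : 'M[C]_n) :
  hadamard_sum X (A + B) = hadamard_sum X A + hadamard_sum X B.
Proof. by rewrite !(hadamard_sumC X) hadamard_sumDl. Qed.

Lemma hadamard_sumZr n a (A X : 'M[C]_n) :
  hadamard_sum X (a *: A) = a * hadamard_sum X A.
Proof. by rewrite !(hadamard_sumC X) hadamard_sumZl. Qed.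

Lemma hadamard_sumBl n (A B X : 'M[C]_n) :
  hadamard_sum (A - B) X = hadamard_sum A X - hadamard_sum B X.
Proof. by rewrite -scaleN1r hadamard_sumDl hadamard_sumZl mulN1r. Qed.

Lemma hadamard_sum1l n (X : 'M[C]_n) : hadamard_sum 1%:M X = \tr X.
Proof.
apply: eq_bigr => k _; rewrite (bigD1 k) //= big1 => [|l /negPf nlk].
  by rewrite mxE eqxx mul1r addr0.
by rewrite mxE eq_sym nlk mul0r.
Qed.

Lemma sum_pair (R : nmodType) (I J : finType) (G : I * J -> R) :
  \sum_u G u = \sum_i \sum_j G (i, j).
Proof. by rewrite (pair_bigA _ (fun i j => G (i, j))); apply: eq_bigr => -[]. Qed.

Lemma sum_qubit (R : nmodType) (F : qubit -> R) : \sum_a F a = F 0 + F 1.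
Proof. by rewrite big_ord_recl big_ord1; congr (_ + F _); apply: val_inj. Qed.

Lemma qform_trace_sub2 (M : 'M[C]_2) w :
  qform (\tr M *: 1%:M - M) w =
  qform M (\col_a (if a == 0 then (w 1 0)^* else - (w 0 0)^*)).
Proof.
rewrite !qformE /mxtrace !sum_qubit !mxE /=.
rewrite !rmorphN /= !conjCK; ring.
Qed.

Lemma psdmx_trace_sub2 (M : 'M[C]_2) : psdmx M -> psdmx (\tr M *: 1%:M - M).
Proof. by move=> psdM w; rewrite qform_trace_sub2. Qed.

Lemma hadamard_sum_le_trace2 (X Y : 'M[C]_2) :
  psdmx X -> psdmx Y -> hadamard_sum X Y <= \tr X * \tr Y.
Proof.
move=> psdX psdY; rewrite -subr_ge0.
have := hadamard_sum_ge0 (psdmx_trace_sub2 psdY) psdX.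
by rewrite hadamard_sumBl hadamard_sumZl hadamard_sum1l (hadamard_sumC Y) mulrC.
Qed.

Lemma hi_ix a b : hi (ix a b) = a.
Proof.
by apply: val_inj; case: a b => [[|[|]]] // ? [[|[|]]] // ?; rewrite /= !inordK.
Qed.

Lemma lo_ix a b : lo (ix a b) = b.
Proof.
by apply: val_inj; case: a b => [[|[|]]] // ? [[|[|]]] // ?; rewrite /= !inordK.
Qed.

Lemma ix_hilo k : ix (hi k) (lo k) = k.
Proof. by apply: val_inj; rewrite /= !inordK ?ltn_divLR ?ltn_mod // mulnC -divn_eq. Qed.

Lemma eq_ix a b a' b' : (ix a b == ix a' b') = (a == a') && (b == b').
Proof.
apply/eqP/andP => [e | [/eqP-> /eqP->] //].
by move: (congr1 hi e) (congr1 lo e); rewrite !hi_ix !lo_ix => -> ->.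
Qed.

Lemma sum_ix (R : nmodType) (F : 'I_4 -> R) : \sum_k F k = \sum_a \sum_b F (ix a b).
Proof.
rewrite pair_bigA (reindex (fun u : qubit * qubit => ix u.1 u.2)) //=.
by exists (fun k => (hi k, lo k)) => [[a b] _ | k _]; rewrite ?hi_ix ?lo_ix ?ix_hilo.
Qed.

Definition ptrace_snd (r : 'M[C]_4) : 'M[C]_2 :=
  \matrix_(a, b) \sum_t r (ix a t) (ix b t).

Lemma mxtrace_ptrace_snd r : \tr (ptrace_snd r) = \tr r.
Proof. by rewrite /mxtrace sum_ix; apply: eq_bigr => a _; rewrite mxE. Qed.

Lemma ptrace_sndD r s : ptrace_snd (r + s) = ptrace_snd r + ptrace_snd s.
Proof.
by apply/matrixP => a b; rewrite !mxE -big_split; apply: eq_bigr => t _; rewrite mxE.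
Qed.

Lemma ptrace_sndZ c r : ptrace_snd (c *: r) = c *: ptrace_snd r.
Proof.
by apply/matrixP => a b; rewrite !mxE mulr_sumr; apply: eq_bigr => t _; rewrite mxE.
Qed.

Lemma qform_ptrace_snd r w :
  qform (ptrace_snd r) w =
  \sum_t qform r (\col_k (w (hi k) 0 * (lo k == t)%:R)).
Proof.
under eq_bigr do rewrite qformE.
rewrite qformE !(sum_ix, sum_qubit, mxE, hi_ix, lo_ix) /= !rmorphM /= !rmorph1 !rmorph0.
ring.
Qed.

Lemma psdmx_ptrace_snd r : psdmx r -> psdmx (ptrace_snd r).
Proof. by move=> psdr w; rewrite qform_ptrace_snd; apply: sumr_ge0. Qed.

Lemma kron2_11 : kron2 1%:M 1%:M = 1%:M.
Proof.
apply/matrixP => i j; rewrite !mxE -natrM mulnb.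
by rewrite -{3}(ix_hilo i) -{3}(ix_hilo j) eq_ix.
Qed.

Lemma invsqrtC2_mul_conj : (sqrtC 2)^-1 * ((sqrtC 2)^-1)^* = 2^-1 :> C.
Proof. by rewrite geC0_conj ?invr_ge0 ?sqrtC_ge0 ?ler0n // -invfM -expr2 sqrtCK. Qed.

Lemma proj_bell00_ix a b a' b' :
  proj (bell 0 0) (ix a b) (ix a' b') = (a == b)%:R * (a' == b')%:R / 2.
Proof.
rewrite /proj /bell expr0 mulmx1 kron2_11 mul1mx mxE big_ord1 /adjmx !mxE.
rewrite !hi_ix !lo_ix rmorphM /= -invsqrtC2_mul_conj.
by case: (a == b); case: (a' == b'); rewrite ?rmorph0 ?rmorph1; ring.
Qed.

Lemma qform_hadamard_sum (A : 'M[C]_4) v : qform A v = hadamard_sum (proj v)^T A.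
Proof.
rewrite qformE; apply: eq_bigr => k _; apply: eq_bigr => l _.
by rewrite !mxE big_ord1 /adjmx !mxE; ring.
Qed.

Lemma tr_proj_bell00 : (proj (bell 0 0))^T = proj (bell 0 0).
Proof.
apply/matrixP => k l; rewrite mxE -(ix_hilo k) -(ix_hilo l) !proj_bell00_ix.
by congr (_ * _); rewrite mulrC.
Qed.

Lemma fid00E r : fid00 r = hadamard_sum (proj (bell 0 0)) r.
Proof. by rewrite -[fid00 r]/(qform r _) qform_hadamard_sum tr_proj_bell00. Qed.

Lemma hadamard_sum_ix (A B : 'M[C]_4) :
  hadamard_sum A B =
  \sum_a \sum_b \sum_a' \sum_b' A (ix a' b') (ix a b) * B (ix a' b') (ix a b).
Proof.
rewrite /hadamard_sum exchange_big sum_ix.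
by do 2!apply: eq_bigr => ? _; rewrite sum_ix.
Qed.

Lemma hadamard_sum_bell00 : hadamard_sum (proj (bell 0 0)) (proj (bell 0 0)) = 1.
Proof.
by rewrite hadamard_sum_ix !sum_qubit !proj_bell00_ix /=; field.
Qed.

Lemma ptrace_snd_bell00 : ptrace_snd (proj (bell 0 0)) = 2^-1 *: 1%:M.
Proof.
apply/matrixP => a b; rewrite !mxE.
under eq_bigr => t _ do rewrite proj_bell00_ix -mulrA.
by rewrite sum_delta mulrC eq_sym.
Qed.

Lemma sum_q4_eqA (G : q4 -> C) :
  \sum_x (gA1 x == gA2 x)%:R * G x = \sum_a \sum_b1 \sum_b2 G (a, b1, a, b2).
Proof.
rewrite !sum_pair /gA1 /gA2 /=; apply: eq_bigr => a _; rewrite exchange_big.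
under eq_bigr => a' _ do under eq_bigr => b _ do rewrite -mulr_sumr.
by under eq_bigr => a' _ do rewrite -mulr_sumr; rewrite sum_delta.
Qed.

Lemma sum_q4_diag (G : q4 -> C) :
  \sum_x (gA1 x == gA2 x)%:R * ((gB1 x == gB2 x)%:R * G x) =
  \sum_a \sum_b G (a, b, a, b).
Proof.
by rewrite sum_q4_eqA; apply: eq_bigr => a _; apply: eq_bigr => b _; rewrite sum_delta.
Qed.

Lemma sum_q4_eqA_pinB (b1 b2 : qubit) (G : q4 -> C) :
  \sum_y (gA1 y == gA2 y)%:R * ((b1 == gB1 y)%:R * ((b2 == gB2 y)%:R * G y)) =
  \sum_a G (a, b1, a, b2).
Proof.
rewrite sum_q4_eqA /gB1 /gB2 /=; apply: eq_bigr => a _.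
by under eq_bigr => b _ do rewrite -mulr_sumr sum_delta; rewrite sum_delta.
Qed.

Lemma tr4_projAB00 r s : tr4 (projAB 0 0) (tens4 r s) = hadamard_sum r s / 4.
Proof.
transitivity (4^-1 * \sum_x (gA1 x == gA2 x)%:R * ((gB1 x == gB2 x)%:R *
  \sum_y (gA1 y == gA2 y)%:R * ((gB1 y == gB2 y)%:R * tens4 r s y x))).
  rewrite mulr_sumr; apply: eq_bigr => x _; rewrite !mulr_sumr.
  by apply: eq_bigr => y _; rewrite /projAB !proj_bell00_ix; field.
by under eq_bigr => x _ do rewrite sum_q4_diag; rewrite sum_q4_diag mulrC hadamard_sum_ix.
Qed.

Lemma pprime00E r s :
  pprime 0 0 r s = hadamard_sum (ptrace_snd r) (ptrace_snd s) / 2.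
Proof.
transitivity (2^-1 * \sum_x (gA1 x == gA2 x)%:R * \sum_y (gA1 y == gA2 y)%:R *
  ((gB1 x == gB1 y)%:R * ((gB2 x == gB2 y)%:R * tens4 r s y x))).
  rewrite /tr4 mulr_sumr; apply: eq_bigr => x _; rewrite !mulr_sumr.
  by apply: eq_bigr => y _; rewrite /projA proj_bell00_ix -mulnb natrM; field.
under eq_bigr => x _ do rewrite sum_q4_eqA_pinB.
rewrite sum_q4_eqA mulrC; congr (_ / 2).
rewrite /hadamard_sum [RHS]exchange_big; apply: eq_bigr => a _.
under [RHS]eq_bigr => a' _ do rewrite !mxE big_distrlr.
by rewrite [RHS]exchange_big; apply: eq_bigr => b1 _; rewrite [RHS]exchange_big.
Qed.

Lemma Fprime00E r s :
  Fprime 0 0 r s = hadamard_sum r s / (2 * hadamard_sum (ptrace_snd r) (ptrace_snd s)).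
Proof.
have inv4_2 : 4^-1 * 2 = 2^-1 :> C by field.
rewrite /Fprime tr4_projAB00 pprime00E !invfM invrK -mulrA; congr (_ * _).
by rewrite mulrCA inv4_2 mulrC.
Qed.

Lemma ler_ratio_shrink (R : numFieldType) (p c b a t x : R) :
  0 <= p -> 0 <= c -> 0 < b -> 0 <= a -> 0 <= t -> t <= 1 -> 0 <= x ->
  p * c / (p * b + a) <= (p * c + x) / (p * b + a * t).
Proof.
move=> p_ge0 c_ge0 b_gt0 a_ge0 t_ge0 t_le1 x_ge0.
have [->|p_neq0] := eqVneq p 0.
  by rewrite !mul0r !add0r divr_ge0 ?mulr_ge0.
have pb_gt0 : 0 < p * b by rewrite mulr_gt0 // lt_def p_neq0.
have u_gt0 : 0 < p * b + a * t by rewrite ltr_wpDr ?mulr_ge0.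
apply: (@le_trans _ _ (p * c / (p * b + a * t))).
  apply: ler_wpM2l; first exact: mulr_ge0.
  by rewrite lef_pV2 ?posrE ?ltr_wpDr ?mulr_ge0 // lerD2l ler_piMr.
by rewrite ler_pM2r ?invr_gt0 // lerDl.
Qed.

Section Mixture.

Variables (p F : C) (s1 s2 r1 r2 : 'M[C]_4).
Hypothesis r1E : r1 = p *: proj (bell 0 0) + (1 - p) *: s1.
Hypothesis r2E : r2 = p *: proj (bell 0 0) + (1 - p) *: s2.

Lemma hadamard_sum_mix : fid00 r1 = F -> fid00 r2 = F ->
  hadamard_sum r1 r2 = p * (2 * F - p) + (1 - p) ^+ 2 * hadamard_sum s1 s2.
Proof.
move=> f1 f2; have -> : 2 * F = fid00 r1 + fid00 r2 by rewrite f1 f2 mulr2n mulrDl mul1r.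
rewrite !fid00E r1E r2E.
rewrite !(hadamard_sumDl, hadamard_sumDr, hadamard_sumZl, hadamard_sumZr).
by rewrite hadamard_sum_bell00 (hadamard_sumC s1); ring.
Qed.

Lemma hadamard_sum_ptrace_mix : \tr s1 = 1 -> \tr s2 = 1 ->
  2 * hadamard_sum (ptrace_snd r1) (ptrace_snd r2) =
  p * (2 - p) + 2 * (1 - p) ^+ 2 * hadamard_sum (ptrace_snd s1) (ptrace_snd s2).
Proof.
move=> tr_s1 tr_s2.
rewrite r1E r2E !(ptrace_sndD, ptrace_sndZ) ptrace_snd_bell00.
rewrite !(hadamard_sumDl, hadamard_sumDr, hadamard_sumZl, hadamard_sumZr).
rewrite !hadamard_sum1l (hadamard_sumC _ 1%:M) hadamard_sum1l mxtrace1.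
by rewrite !mxtrace_ptrace_snd tr_s1 tr_s2; field.
Qed.

End Mixture.

Theorem proposition4 (p F : algC) :
  0 <= F -> F <= 1 -> 0 <= p -> p <= F ->
  forall rho1 rho2 : 'M[algC]_4,
    S_pF p F rho1 -> S_pF p F rho2 ->
    p * (2 * F - p) / (1 + (1 - p) ^+ 2) <= Fprime 0 0 rho1 rho2.
Proof.
move=> F_ge0 F_le1 p_ge0 p_leF r1 r2.
move=> [_ [[s1 [[psd_s1 tr_s1] r1E]] fid_r1]] [_ [[s2 [[psd_s2 tr_s2] r2E]] fid_r2]].
have psd_t1 := psdmx_ptrace_snd psd_s1; have psd_t2 := psdmx_ptrace_snd psd_s2.
have t_le1 : hadamard_sum (ptrace_snd s1) (ptrace_snd s2) <= 1.
  by rewrite -(mulr1 1) -{1}tr_s1 -tr_s2 -!mxtrace_ptrace_snd hadamard_sum_le_trace2.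
rewrite Fprime00E (hadamard_sum_mix r1E r2E fid_r1 fid_r2).
rewrite (hadamard_sum_ptrace_mix r1E r2E tr_s1 tr_s2).
rewrite (_ : 1 + (1 - p) ^+ 2 = p * (2 - p) + 2 * (1 - p) ^+ 2); last by ring.
have p_le1 : p <= 1 := le_trans p_leF F_le1.
have sq_ge0 : 0 <= (1 - p) ^+ 2 by rewrite exprn_ge0 ?subr_ge0.
apply: ler_ratio_shrink => //.
- by rewrite subr_ge0 mulr_natl mulr2n (le_trans p_leF) ?lerDl.
- by rewrite subr_gt0 (le_lt_trans p_le1) ?ltr1n.
- by rewrite mulr_ge0.
- exact: hadamard_sum_ge0.
- by rewrite mulr_ge0 ?hadamard_sum_ge0.
Qed.
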